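(* Let $R$ be a local ring (i.e. $R/J(R)$ is a division ring), ${}_RM$ a finitely generated semisimple left $R$-module with $d=\dim_R(M)$, $\varphi:M\to M$ a nilpotent $R$-endomorphism with index of nilpotency $n$ ($\varphi^n=0\ne\varphi^{n-1}$), and $\sigma\in\mathrm{Hom}_R(M,M)$ arbitrary. Then the following are equivalent: (1) $C_\varphi\subseteq C_\sigma$; (2) there exist an $R$-generating set $\{y_j\in M\mid1\le j\le d\}$ of ${}_RM$ and elements $a_1,\dots,a_n\in R$ such that \[a_1\psi(y_j)+a_2\varphi(\psi(y_j))+\cdots+a_n\varphi^{n-1}(\psi(y_j))=\sigma(\psi(y_j))\] for all $1\le j\le d$ and all $\psi\in C_\varphi$.
   Context: For $\alpha\in\mathrm{Hom}_R(M,M)$, $C_\alpha=\{\psi\in\mathrm{Hom}_R(M,M)\mid\psi\circ\alpha=\alpha\circ\psi\}$. $J(R)$ is the Jacobson radical and $\dim_R$ is composition length. *)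

From HB Require Import structures.
From mathcomp Require Import all_boot all_order all_algebra.
Set Implicit Arguments. Unset Strict Implicit. Unset Printing Implicit Defensive.
Import GRing.Theory.
Local Open Scope ring_scope.

Section RingDefs.
Variable R : nzRingType.

Definition left_ideal (I : R -> Prop) : Prop :=
  [/\ I 0, (forall x y, I x -> I y -> I (x + y)) & (forall r x, I x -> I (r * x))].

Definition maximal_left_ideal (I : R -> Prop) : Prop :=
  [/\ left_ideal I, ~ I 1 &
      forall K : R -> Prop, left_ideal K -> ~ K 1 ->
        (forall x, I x -> K x) -> forall x, K x -> I x].

Definition jacobson (x : R) : Prop :=
  forall I, maximal_left_ideal I -> I x.

(* R is local: R / J(R) is a division ring, i.e. it is nonzero and every
   nonzero class has a two-sided inverse in R / J(R). *)
Definition local_ring : Prop :=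
  ~ jacobson 1 /\
  forall x, ~ jacobson x ->
    exists y, jacobson (y * x - 1) /\ jacobson (x * y - 1).
End RingDefs.

Section ModDefs.
Variables (R : nzRingType) (M : lmodType R).

Definition submodule (S : M -> Prop) : Prop :=
  [/\ S 0, (forall x y, S x -> S y -> S (x + y)) & (forall a x, S x -> S (a *: x))].

Definition generates (k : nat) (y : 'I_k -> M) : Prop :=
  forall m : M, exists c : 'I_k -> R, m = \sum_(j < k) c j *: y j.

Definition fin_generated : Prop := exists k (y : 'I_k -> M), generates y.

Definition semisimple : Prop :=
  forall S, submodule S -> exists T, [/\ submodule T,
    (forall x, S x -> T x -> x = 0) &
    (forall m, exists s t, [/\ S s, T t & m = s + t])].

Definition comp_series (d : nat) (S : nat -> M -> Prop) : Prop :=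
  [/\ (forall i, submodule (S i)),
      (forall x, S 0%N x <-> x = 0),
      (forall x, S d x) &
      (forall i, (i < d)%N ->
        [/\ (forall x, S i x -> S i.+1 x),
            (exists x, S i.+1 x /\ ~ S i x) &
            (forall T, submodule T -> (forall x, S i x -> T x) ->
               (forall x, T x -> S i.+1 x) ->
               (forall x, T x -> S i x) \/ (forall x, S i.+1 x -> T x))])].

(* dim_R M = d : composition length *)
Definition comp_length (d : nat) : Prop := exists S, comp_series d S.

Definition centralizer (alpha : {linear M -> M}) (psi : {linear M -> M}) : Prop :=
  forall m, psi (alpha m) = alpha (psi m).
End ModDefs.

From HB Require Import structures.
From mathcomp Require Import all_boot all_order all_algebra.
From Stdlib Require Import Classical ClassicalEpsilon.
From mathcomp Require Import zify.
Set Implicit Arguments. Unset Strict Implicit. Unset Printing Implicit Defensive.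
Import GRing.Theory.
Local Open Scope ring_scope.

(* J(R) annihilates the semisimple module M of finite length, so over the local
   ring R a scalar killing one nonzero element kills all of M.  Hence, for m0 with
   phi^(n-1) m0 <> 0, the vectors m0, phi m0, ..., phi^(n-1) m0 are independent
   modulo Ann(M), and their span W has a complement C.  The coordinate along
   phi^(n-1) m0 in M = W + C yields, for every x, an endomorphism in C_phi sending
   m0 to x.  If C_phi is contained in C_sigma, applying sigma through these
   endomorphisms shows that sigma agrees everywhere with the polynomial in phi that
   it is on m0.  Conversely, taking psi = id gives sigma = p(phi) on generators,
   and every psi in C_phi commutes with p(phi). *)

Section Iterates.
Variables (R : nzRingType) (M : lmodType R) (f : {linear M -> M}).

Lemma iter_linear0 k : iter k f 0 = 0.
Proof. by elim: k => //= k ->; rewrite linear0. Qed.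

Lemma iter_linearD k u v : iter k f (u + v) = iter k f u + iter k f v.
Proof. by elim: k => //= k ->; rewrite linearD. Qed.

Lemma iter_linearZ k a u : iter k f (a *: u) = a *: iter k f u.
Proof. by elim: k => //= k ->; rewrite linearZ. Qed.

Lemma iter_linear_sum k (I : finType) (F : I -> M) :
  iter k f (\sum_i F i) = \sum_i iter k f (F i).
Proof.
elim/big_rec2: _ => [|i y1 y2 _ <-]; [exact: iter_linear0 | exact: iter_linearD].
Qed.

Lemma iter_nilpotent_ge n k m :
  (forall m : M, iter n f m = 0) -> (n <= k)%N -> iter k f m = 0.
Proof. by move=> fn0 le_nk; rewrite -(subnK le_nk) iterD fn0 iter_linear0. Qed.

Lemma centralizer_iter (psi : {linear M -> M}) k m :
  centralizer f psi -> psi (iter k f m) = iter k f (psi m).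
Proof. by move=> fpsi; elim: k => //= k <-; rewrite fpsi. Qed.

Lemma centralizer_iter_sum (psi : {linear M -> M}) k (a : 'I_k -> R) m :
  centralizer f psi ->
  psi (\sum_(i < k) a i *: iter i f m) = \sum_(i < k) a i *: iter i f (psi m).
Proof.
move=> fpsi; rewrite linear_sum; apply: eq_bigr => i _.
by rewrite linearZ centralizer_iter.
Qed.

End Iterates.

Section Modules.
Variables (R : nzRingType) (M : lmodType R).

Definition annihilates (r : R) : Prop := forall m : M, r *: m = 0.

Lemma annihilates_scale_eq r r' (m : M) : annihilates (r - r') -> r *: m = r' *: m.
Proof. by move=> /(_ m); rewrite scalerBl => /eqP; rewrite subr_eq0 => /eqP. Qed.

Lemma left_ideal_ann_elem (t : M) : left_ideal (fun r : R => r *: t = 0).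
Proof.
split=> [|a b ta tb|r a ta]; first exact: scale0r.
  by rewrite scalerDl ta tb addr0.
by rewrite -scalerA ta scaler0.
Qed.

Lemma left_idealT : left_ideal (fun _ : R => True).
Proof. by []. Qed.

Definition span_of k (y : 'I_k -> M) (v : M) : Prop :=
  exists c : 'I_k -> R, v = \sum_j c j *: y j.

Lemma span_of_submodule k (y : 'I_k -> M) : submodule (span_of y).
Proof.
split.
- by exists (fun _ => 0); rewrite big1 // => j _; rewrite scale0r.
- move=> u v [c1 ->] [c2 ->]; exists (fun j => c1 j + c2 j).
  by rewrite -big_split; apply: eq_bigr => j _; rewrite scalerDl.
- move=> b u [c ->]; exists (fun j => b * c j).
  by rewrite scaler_sumr; apply: eq_bigr => j _; rewrite scalerA.
Qed.

Lemma span_of_gen k (y : 'I_k -> M) j : span_of y (y j).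
Proof.
exists (fun i => (i == j)%:R); rewrite (bigD1 j) //= eqxx scale1r big1 ?addr0 //.
by move=> i /negPf ->; rewrite scale0r.
Qed.

Lemma centralizer_on_generators k (y : 'I_k -> M) (sigma psi : {linear M -> M}) :
  generates y -> (forall j, psi (sigma (y j)) = sigma (psi (y j))) ->
  centralizer sigma psi.
Proof.
move=> gen_y comm_y m; have [c ->] := gen_y m.
rewrite !linear_sum; apply: eq_bigr => j _.
by rewrite !linearZ /= comm_y.
Qed.

Definition add_span (S : M -> Prop) (K : R -> Prop) (t : M) (v : M) : Prop :=
  exists s k, [/\ S s, K k & v = s + k *: t].

Lemma add_span_submodule S K t :
  submodule S -> left_ideal K -> submodule (add_span S K t).
Proof.
move=> [S0 SD SZ] [K0 KD KZ]; split.
- by exists 0, 0; rewrite scale0r addr0.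
- move=> u v [s1 [k1 [? ? ->]]] [s2 [k2 [? ? ->]]].
  exists (s1 + s2), (k1 + k2); split; [exact: SD | exact: KD |].
  by rewrite scalerDl addrACA.
- move=> b u [s [k [? ? ->]]]; exists (b *: s), (b * k); split; [exact: SZ | exact: KZ |].
  by rewrite scalerDr scalerA.
Qed.

Definition no_intermediate (S S' : M -> Prop) : Prop :=
  forall T, submodule T -> (forall x, S x -> T x) -> (forall x, T x -> S' x) ->
    (forall x, T x -> S x) \/ (forall x, S' x -> T x).

Lemma add_span_dichotomy S S' K t :
  submodule S -> submodule S' -> (forall x, S x -> S' x) -> no_intermediate S S' ->
  left_ideal K -> S' t ->
  (forall v, add_span S K t v -> S v) \/ (forall v, S' v -> add_span S K t v).
Proof.
move=> subS [_ S'D S'Z] SS' SS'min subK S't.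
apply: SS'min; first exact: add_span_submodule.
  by case: subK => K0 _ _ v Sv; exists v, 0; rewrite scale0r addr0.
by move=> v [s [k [Ss _ ->]]]; apply: S'D; [exact: SS' | exact: S'Z].
Qed.

Lemma ann_elem_maximal S S' T (t : M) :
  submodule S -> submodule S' -> submodule T ->
  (forall x, S x -> S' x) -> no_intermediate S S' ->
  (forall x, S x -> T x -> x = 0) -> S' t -> T t -> t != 0 ->
  maximal_left_ideal (fun r : R => r *: t = 0).
Proof.
move=> subS subS' [_ TD TZ] SS' SS'min disjST S't Tt t_neq0.
split; [exact: left_ideal_ann_elem | by rewrite scale1r; apply/eqP |].
move=> K subK notK1 annK a Ka.
have [span_in_S | S'_in_span] := add_span_dichotomy subS subS' SS' SS'min subK S't.
  apply: disjST; last exact: TZ.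
  by apply: span_in_S; exists 0, a; rewrite add0r; split=> //; case: subS.
have [s [k [Ss Kk Et]]] := S'_in_span t S't.
have s_eq : s = (1 - k) *: t by rewrite scalerBl scale1r {1}Et addrK.
have /annK K1k : (1 - k) *: t = 0.
  apply: disjST; first by rewrite -s_eq.
  by rewrite scalerBl scale1r -scaleN1r; apply: TD => //; exact: TZ (TZ _ _ Tt).
by case: subK => _ KD _; have := KD _ _ K1k Kk; rewrite subrK.
Qed.

(* Each simple factor S_(i+1)/S_i is isomorphic to R t for t in a complement of
   S_i, and Ann(t) is a maximal left ideal, hence contains J(R). *)
Lemma jacobson_annihilates d (S : nat -> M -> Prop) :
  comp_series d S -> semisimple M -> forall j, jacobson j -> annihilates j.
Proof.
move=> [subS S0 Sd Sstep] ssM j Jj.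
suff Sj : forall i, (i <= d)%N -> forall x, S i x -> j *: x = 0.
  by move=> m; exact: (Sj d).
elim=> [|i IH] lt_id x Six; first by move/S0: Six ->; rewrite scaler0.
have [SS' _ SS'min] := Sstep i lt_id.
have [T [subT disjST decST]] := ssM _ (subS i).
have [s [t [Ss Tt x_eq]]] := decST x.
rewrite x_eq scalerDr (IH (ltnW lt_id) _ Ss) add0r.
have S't : S i.+1 t.
  have [_ S'D S'Z] := subS i.+1.
  have -> : t = x + (-1) *: s by rewrite x_eq scaleN1r addrAC subrr add0r.
  by apply: S'D => //; apply: S'Z; apply: SS'.
have [->|t_neq0] := eqVneq t 0; first by rewrite scaler0.
exact: (Jj _ (ann_elem_maximal (subS i) (subS i.+1) subT SS' SS'min disjST S't Tt t_neq0)).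
Qed.

Lemma comp_series_generates d (S : nat -> M -> Prop) :
  comp_series d S -> exists y : 'I_d -> M, generates y.
Proof.
move=> [subS S0 Sd Sstep].
have new_elem (i : 'I_d) : {x | S i.+1 x /\ ~ S i x}.
  by apply: constructive_indefinite_description; have [_ ? _] := Sstep i (ltn_ord i).
pose y i := sval (new_elem i); exists y => m.
suff spanS : forall i, (i <= d)%N -> forall x, S i x -> span_of y x.
  exact: spanS (Sd m).
have [span0 spanD spanZ] := span_of_submodule y.
elim=> [|i IH] lt_id x Six; first by move/S0: Six => ->.
pose i0 : 'I_d := Ordinal lt_id.
have [S'y notSy] := svalP (new_elem i0).
have [SS' _ SS'min] := Sstep i lt_id.
have [span_in_S | S'_in_span] :=
  add_span_dichotomy (subS i) (subS i.+1) SS' SS'min left_idealT S'y.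
  case: notSy; apply: span_in_S; exists 0, 1.
  by rewrite scale1r add0r; split=> //; case: (subS i).
have [s [r [Ss _ ->]]] := S'_in_span x Six.
by apply: spanD; [exact: IH (ltnW lt_id) _ Ss | apply: spanZ; exact: (span_of_gen y i0)].
Qed.

Lemma local_annihilates_of_ann (z : M) r :
  local_ring R -> (forall j, jacobson j -> annihilates j) ->
  z != 0 -> r *: z = 0 -> annihilates r.
Proof.
move=> [_ Rlocal] Jann z_neq0 rz.
have [Jr | notJr] := classic (jacobson r); first exact: Jann.
have [y [Jyr _]] := Rlocal r notJr.
have := Jann _ Jyr z; rewrite scalerBl -scalerA rz scaler0 scale1r sub0r.
by move/eqP; rewrite oppr_eq0 (negPf z_neq0).
Qed.

End Modules.

Section CyclicSummand.
Variables (R : nzRingType) (M : lmodType R) (phi : {linear M -> M}) (n : nat) (m0 : M).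
Hypothesis phi_nil : forall m : M, iter n.+1 phi m = 0.
Hypothesis top_faithful : forall r, r *: iter n phi m0 = 0 -> annihilates M r.

Lemma orbit_independent (c : 'I_n.+1 -> R) :
  \sum_i c i *: iter i phi m0 = 0 -> forall i, annihilates M (c i).
Proof.
move=> c_rel; suff ann_lt k : forall i : 'I_n.+1, (i < k)%N -> annihilates M (c i).
  by move=> i; apply: (ann_lt i.+1).
elim: k => [//|k IH] i; rewrite ltnS leq_eqVlt => /orP[/eqP i_eq|]; last exact: IH.
apply: top_faithful; have := congr1 (iter (n - k) phi) c_rel.
rewrite iter_linear0 iter_linear_sum (bigD1 i) //= big1 ?addr0.
  by rewrite iter_linearZ -iterD i_eq subnK // -i_eq -ltnS.
move=> j j_neq_i; rewrite iter_linearZ -iterD.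
case: (ltngtP j i) => [lt_ji|lt_ij|/val_inj eq_ji]; last by rewrite eq_ji eqxx in j_neq_i.
  by apply: IH; rewrite -i_eq.
rewrite (@iter_nilpotent_ge _ _ phi n.+1) ?scaler0 //.
by move: lt_ij (ltn_ord i); rewrite -i_eq; lia.
Qed.

Let orbit (i : 'I_n.+1) := iter i phi m0.

Variable C : M -> Prop.
Hypothesis C_submodule : submodule C.
Hypothesis orbit_C_disj : forall x, span_of orbit x -> C x -> x = 0.
Hypothesis orbit_C_dec : forall m, exists s t, [/\ span_of orbit s, C t & m = s + t].

Let C0 : C 0. Proof. by case: C_submodule. Qed.

Lemma coord_exists v :
  exists c : 'I_n.+1 -> R, exists2 t, C t & v = \sum_i c i *: orbit i + t.
Proof. by have [s [t [[c ->] Ct ->]]] := orbit_C_dec v; exists c, t. Qed.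

Definition coord v : 'I_n.+1 -> R :=
  sval (constructive_indefinite_description _ (coord_exists v)).

Lemma coordP v : exists2 t, C t & v = \sum_i coord v i *: orbit i + t.
Proof. exact: (svalP (constructive_indefinite_description _ (coord_exists v))). Qed.

Lemma coord_unique v c t : C t -> v = \sum_i c i *: orbit i + t ->
  forall i, annihilates M (coord v i - c i).
Proof.
move=> Ct v_eq; have [t' Ct' v_eq'] := coordP v.
have diff_eq : \sum_i (coord v i - c i) *: orbit i = t - t'.
  under eq_bigr do rewrite scalerBl.
  rewrite sumrB.
  have -> : \sum_i coord v i *: orbit i = v - t' by rewrite [in RHS]v_eq' addrK.
  have -> : \sum_i c i *: orbit i = v - t by rewrite [in RHS]v_eq addrK.
  by rewrite opprB addrC addrA subrK.
apply: (orbit_independent (c := fun i => coord v i - c i)).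
apply: orbit_C_disj; first by exists (fun i => coord v i - c i).
by case: C_submodule => _ CD CZ; rewrite diff_eq -scaleN1r; apply: CD => //; exact: CZ.
Qed.

Definition lead_coord v := coord v ord_max.

Lemma lead_coord_linear a u v :
  annihilates M (lead_coord (a *: u + v) - (a * lead_coord u + lead_coord v)).
Proof.
have [tu Ctu u_eq] := coordP u; have [tv Ctv v_eq] := coordP v.
apply: (coord_unique (c := fun i => a * coord u i + coord v i) (t := a *: tu + tv)).
  by case: C_submodule => _ CD CZ; apply: CD => //; apply: CZ.
under [in RHS]eq_bigr do rewrite scalerDl -scalerA.
by rewrite big_split /= -scaler_sumr {1}u_eq {1}v_eq scalerDr addrACA.
Qed.

Lemma lead_coord0 : annihilates M (lead_coord 0).
Proof.
have := @coord_unique 0 (fun _ => 0) 0; rewrite big1 ?addr0 => [ann0|i _]; last exact: scale0r.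
by have := ann0 C0 erefl ord_max; rewrite subr0.
Qed.

Lemma lead_coord_orbit k : (k <= n)%N ->
  annihilates M (lead_coord (iter k phi m0) - (k == n)%:R).
Proof.
move=> le_kn; pose k0 : 'I_n.+1 := Ordinal (le_kn : (k < n.+1)%N).
have := @coord_unique (iter k phi m0) (fun i => (i == k0)%:R) 0 C0.
rewrite addr0 (bigD1 k0) //= eqxx scale1r big1 ?addr0 => [/(_ erefl ord_max)|i /negPf ->].
  by rewrite /lead_coord -(inj_eq val_inj) /= eq_sym.
exact: scale0r.
Qed.

(* Sends phi^k m0 to phi^k x. *)
Definition orbit_extension_fun (x v : M) :=
  \sum_(i < n.+1) lead_coord (iter i phi v) *: iter (n - i) phi x.

Lemma orbit_extension_is_linear x : linear (orbit_extension_fun x).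
Proof.
move=> a u v; rewrite /orbit_extension_fun scaler_sumr -big_split.
apply: eq_bigr => i _; rewrite iter_linearD iter_linearZ.
by rewrite (annihilates_scale_eq _ (lead_coord_linear _ _ _)) scalerDl scalerA.
Qed.

Definition orbit_extension x : {linear M -> M} := HB.pack (orbit_extension_fun x)
  (GRing.isLinear.Build R M M *:%R (orbit_extension_fun x) (orbit_extension_is_linear x)).

Lemma orbit_extensionE x v :
  orbit_extension x v = \sum_(i < n.+1) lead_coord (iter i phi v) *: iter (n - i) phi x.
Proof. by []. Qed.

Lemma orbit_extension_centralizer x : centralizer phi (orbit_extension x).
Proof.
move=> v; rewrite !orbit_extensionE big_ord_recr /= [in RHS]linear_sum big_ord_recl /=.
rewrite -iterSr phi_nil lead_coord0 addr0 linearZ /= subn0 -iterS phi_nil scaler0 add0r.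
apply: eq_bigr => i _; rewrite linearZ /= -iterSr /bump leq0n add1n add0n -!iterS subnSK //.
Qed.

Lemma orbit_extension_m0 x : orbit_extension x m0 = x.
Proof.
rewrite orbit_extensionE big_ord_recr /= big1 ?add0r => [|i _].
  by rewrite (annihilates_scale_eq _ (lead_coord_orbit (leqnn n))) eqxx subnn scale1r.
rewrite (annihilates_scale_eq _ (lead_coord_orbit (ltnW (ltn_ord i)))).
by rewrite ltn_eqF ?scale0r.
Qed.

Lemma centralizer_sub_iter_poly (sigma : {linear M -> M}) :
  (forall psi : {linear M -> M}, centralizer phi psi -> centralizer sigma psi) ->
  exists a : 'I_n.+1 -> R, forall x, sigma x = \sum_i a i *: iter i phi x.
Proof.
move=> Cphi_Csigma.
have sigma_ext x : sigma (orbit_extension x m0) = orbit_extension x (sigma m0).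
  by rewrite (Cphi_Csigma _ (orbit_extension_centralizer x)).
pose a (i : 'I_n.+1) := lead_coord (iter (n - i) phi (sigma m0)); exists a => x.
have sigma_m0 : sigma m0 = \sum_i a i *: iter i phi m0.
  rewrite -{1}(orbit_extension_m0 m0) sigma_ext orbit_extensionE (reindex_inj rev_ord_inj) /=.
  by apply: eq_bigr => i _; rewrite /a subSS subKn // -ltnS.
rewrite -{1}(orbit_extension_m0 x) sigma_ext [in LHS]sigma_m0.
by rewrite centralizer_iter_sum ?orbit_extension_m0 //; exact: orbit_extension_centralizer.
Qed.

End CyclicSummand.

Theorem theorem4p10 (R : nzRingType) (M : lmodType R) (d n : nat)
  (phi sigma : {linear M -> M}) :
  local_ring R ->
  fin_generated M -> semisimple M -> comp_length M d ->
  (forall m : M, iter n phi m = 0) -> (exists m : M, iter n.-1 phi m != 0) ->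
  ((forall psi : {linear M -> M}, centralizer phi psi -> centralizer sigma psi)
   <->
   (exists (y : 'I_d -> M) (a : 'I_n -> R), generates y /\
      forall (j : 'I_d) (psi : {linear M -> M}), centralizer phi psi ->
        \sum_(i < n) a i *: iter i phi (psi (y j)) = sigma (psi (y j)))).
Proof.
move=> Rlocal _ ssM [S compS] phi_nil [m0 top_neq0].
split=> [Cphi_Csigma | [y [a [gen_y sigma_y]]] psi Cpsi]; last first.
  apply: (centralizer_on_generators gen_y) => j.
  have sigma_yj : sigma (y j) = \sum_i a i *: iter i phi (y j).
    by rewrite (sigma_y j idfun).
  by rewrite sigma_yj centralizer_iter_sum // sigma_y.
case: n phi_nil top_neq0 => [|n] phi_nil top_neq0.
  by rewrite /= -[m0]/(iter 0 phi m0) phi_nil eqxx in top_neq0.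
have top_faithful r : r *: iter n phi m0 = 0 -> annihilates M r.
  exact: local_annihilates_of_ann Rlocal (jacobson_annihilates compS ssM) top_neq0.
have [C [subC disjC decC]] := ssM _ (span_of_submodule (fun i : 'I_n.+1 => iter i phi m0)).
have [a sigma_poly] :=
  centralizer_sub_iter_poly phi_nil top_faithful subC disjC decC Cphi_Csigma.
have [y gen_y] := comp_series_generates compS.
by exists y, a; split=> // j psi _; rewrite sigma_poly.
Qed.
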